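(* Let $\rho$ be a density matrix on $\mathcal F$ (positive, trace one) that commutes with the particle number operator $\hat{\mathbb N}=\sum_{i=1}^n c_i^*c_i$, where $c_i=c(\varphi_i)$. Define the numbers $\gamma_{ij}\doteq\operatorname{tr}(\rho\,c_j^*c_i)$ for $i,j\in\mathbb N_n$, and put $\operatorname{tr}\gamma=\sum_i\gamma_{ii}$ and $d\Gamma(\gamma)=\sum_{i,j}\gamma_{ij}c_i^*c_j$. Let $\pi_1$ be the orthogonal projection in $\mathcal L^2(\mathcal F)$ onto $\mathcal O_1$. Then $$2^n\pi_1(\rho)=(n+1-2\operatorname{tr}\gamma)\mathbb 1-2\hat{\mathbb N}+4\,d\Gamma(\gamma).$$
   Context: Let $\mathfrak h$ be a complex Hilbert space of finite dimension $n$ with orthonormal basis $\varphi_1,\dots,\varphi_n$, and $\mathbb N_n=\{1,\dots,n\}$. $\mathcal F=\bigoplus_{k=0}^n\bigwedge^k\mathfrak h$ is the fermion Fock space with the determinant inner product. The creation operators are $c^*(f)\omega=f\wedge\omega$, and $c(f)=c^*(f)^*$. $\mathcal L^2(\mathcal F)$ is the space of all linear operators on $\mathcal F$ with inner product $\langle a,b\rangle=\operatorname{tr}(a^*b)$. For $\omega\in\mathcal F$ let $\mathbf c^*(\omega)\xi=\omega\wedge\xi$ and $\mathbf c(\omega)=\mathbf c^*(\omega)^*$. The space $\mathcal O_1$ of one-body operators is the linear span of the operators $\mathbf c^*(\omega)\mathbf c(\eta)$ with $\omega\in\bigwedge^r\mathfrak h$, $\eta\in\bigwedge^s\mathfrak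 h$ and $r+s\in\{0,2\}$. Equivalently, it is the span of $\mathbb 1$, $c_i^*c_j$, $c_i^*c_j^*$ and $c_ic_j$ for $i,j\in\mathbb N_n$. *)

(* Concrete model of the fermion Fock space over h = C^n
   (orthonormal basis phi_1..phi_n, indexed here by 'I_n), using the basis
   e_S = phi_{s_1} /\ ... /\ phi_{s_k} (s_1 < ... < s_k), S : {set 'I_n}. *)
From HB Require Import structures.
From mathcomp Require Import all_boot all_order all_algebra.
Set Implicit Arguments. Unset Strict Implicit. Unset Printing Implicit Defensive.
Import Order.TTheory GRing.Theory Num.Theory.
Local Open Scope ring_scope.

Section Fock.
Variable C : numClosedFieldType.
Variable n : nat.

Definition fdim := #|{set 'I_n}|.

Definition lbl (r : 'I_fdim) : {set 'I_n} := enum_val r.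

Definition op := 'M[C]_fdim.

Definition adjm (p q : nat) (A : 'M[C]_(p, q)) : 'M[C]_(q, p) :=
  \matrix_(i, j) (A j i)^*.

(* creation operator c_i^* = c^*(phi_i):  phi_i /\ e_S =
   (-1)^{#{j in S | j < i}} e_{S u {i}} if i \notin S, and 0 otherwise. *)
Definition cre (i : 'I_n) : op :=
  \matrix_(r, s)
    (if (i \notin lbl s) && (lbl r == ([set i] :|: lbl s))
     then (-1) ^+ #|[set j in lbl s | (j < i)%N]| else 0).

Definition ann (i : 'I_n) : op := adjm (cre i).

Definition Nhat : op := \sum_(i < n) cre i *m ann i.

Definition hs (a b : op) : C := \tr (adjm a *m b).

Definition inO1 (X : op) : Prop :=
  exists (a : C) (B D E : 'M[C]_n),
    X = a *: 1%:M
        + \sum_(i < n) \sum_(j < n) B i j *: (cre i *m ann j)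
        + \sum_(i < n) \sum_(j < n) D i j *: (cre i *m cre j)
        + \sum_(i < n) \sum_(j < n) E i j *: (ann i *m ann j).

Definition is_orth_proj (S : op -> Prop) (a p : op) : Prop :=
  S p /\ forall b, S b -> hs b (a - p) = 0.

Definition positive_op (A : op) : Prop :=
  forall v : 'cV[C]_fdim, 0 <= (adjm v *m A *m v) 0 0.

Definition density (rho : op) : Prop := positive_op rho /\ \tr rho = 1.

Definition gam (rho : op) : 'M[C]_n :=
  \matrix_(i, j) \tr (rho *m (cre j *m ann i)).

Definition dGamma (g : 'M[C]_n) : op :=
  \sum_(i < n) \sum_(j < n) g i j *: (cre i *m ann j).

End Fock.

From HB Require Import structures.
From mathcomp Require Import all_boot all_order all_algebra.
From mathcomp Require Import ring zify.
Set Implicit Arguments. Unset Strict Implicit. Unset Printing Implicit Defensive.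
Import Order.TTheory GRing.Theory Num.Theory.

(* The right-hand side P lies in O_1, so it is the projection of rho as soon as
   rho - P is orthogonal to the generators 1, c_i^* c_j, c_i^* c_j^*, c_i c_j of O_1.
   Both rho (which commutes with the number operator) and P preserve the particle
   number, whereas c_i^* c_j^* and c_i c_j change it by +-2; this disposes of the
   last two families.  For the others it suffices that <1, P> = 1 = tr rho and
   <c_i^* c_j, P> = gamma_ij = <c_i^* c_j, rho>, which follows from
   tr (c_i^* c_j) = 2^(n-1) delta_ij and the Gram matrix
   <c_i^* c_j, c_k^* c_l> = 2^(n-2) (delta_ik delta_jl + delta_ij delta_kl);
   both are counts of the subsets of {1..n} containing or avoiding prescribed
   indices. *)

Section SubsetCounting.
Variable T : finType.
Implicit Types (i j k l : T) (S : {set T}) (P : pred {set T}).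

Definition toggle i S := if i \in S then S :\ i else i |: S.

Lemma mem_toggle i j S : (j \in toggle i S) = if j == i then i \notin S else j \in S.
Proof.
rewrite /toggle; have [->|nji] := eqVneq j i.
  by case: ifP => iS; rewrite ?setD11 ?setU11 ?iS.
by case: ifP => _; rewrite !inE (negbTE nji).
Qed.

Lemma toggleK i : involutive (toggle i).
Proof.
move=> S; apply/setP => j; rewrite !mem_toggle.
by have [->|] := eqVneq j i; rewrite ?eqxx ?negbK.
Qed.

Section TogglingInvariant.
Variables (P : pred {set T}) (i : T).
Hypothesis toggleP : forall S, P (toggle i S) = P S.

Lemma card_toggle_mem :
  #|[set S | P S && (i \in S)]| = #|[set S | P S && (i \notin S)]|.
Proof.
rewrite -(card_imset _ (can_inj (toggleK i))); apply: eq_card => S.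
rewrite -[S in LHS](toggleK i) mem_imset; last exact: can_inj (toggleK i).
by rewrite !inE toggleP mem_toggle eqxx.
Qed.

Lemma card_toggle_split : #|[set S | P S]| = 2 * #|[set S | P S && (i \in S)]|.
Proof.
rewrite -(cardsID [set S : {set T} | i \in S]) mul2n -addnn {2}card_toggle_mem.
by congr addn; apply: eq_card => S; rewrite !inE // andbC.
Qed.

End TogglingInvariant.

Lemma card_sets : #|{set T}| = 2 ^ #|T|.
Proof. by rewrite -cardsT -card_powerset; apply: eq_card => S; rewrite !inE subsetT. Qed.

Lemma card_mem i : 2 * #|[set S : {set T} | i \in S]| = 2 ^ #|T|.
Proof. by rewrite -card_sets -cardsT (@card_toggle_split predT i). Qed.

Definition hop i j S := i |: (S :\ j).
Definition hoppable i j S := (j \in S) && (i \notin S :\ j).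

Lemma eq_hop i j k l S : hoppable i j S -> hoppable k l S ->
  (hop i j S == hop k l S) = ((i == k) && (j == l)) || ((i == j) && (k == l)).
Proof.
rewrite /hoppable /hop => /andP[hj hi] /andP[hl hk].
have [eij|nij] := eqVneq i j.
  subst j; rewrite setD1K // andbC orbC /=.
  have [ekl|nkl] := eqVneq k l; first by subst k; rewrite setD1K // eqxx.
  have -> : (i == l) && (i == k) = false.
    by apply/negbTE/andP => [[/eqP a /eqP b]]; subst; rewrite eqxx in nkl.
  rewrite orbF; apply/negbTE/eqP => E.
  by move: hl; rewrite E !inE eq_sym (negbTE nkl) eqxx.
rewrite /= orbF.
have [eik|nik] := eqVneq i k; have [ejl|njl] := eqVneq j l => //=.
- by rewrite eik ejl eqxx.
- subst k; apply/negbTE/eqP => E.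
  have : j \in i |: S :\ j by rewrite E !inE njl hj andbT orbT.
  by rewrite !inE eqxx /= orbF eq_sym (negbTE nij).
- apply/negbTE/eqP => E.
  have := setU11 i (S :\ j); rewrite E !inE (negbTE nik) /=.
  by move: hi; rewrite !inE (negbTE nij) /= => /negbTE ->; rewrite andbF.
- apply/negbTE/eqP => E.
  have := setU11 i (S :\ j); rewrite E !inE (negbTE nik) /=.
  by move: hi; rewrite !inE (negbTE nij) /= => /negbTE ->; rewrite andbF.
Qed.

Lemma hoppable_diag i S : hoppable i i S = (i \in S).
Proof. by rewrite /hoppable setD11 andbT. Qed.

Lemma hop_diag i S : i \in S -> hop i i S = S.
Proof. exact: setD1K. Qed.

Lemma card_mem2 i k : i != k ->
  4 * #|[set S : {set T} | (i \in S) && (k \in S)]| = 2 ^ #|T|.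
Proof.
move=> nik; rewrite -(card_mem i) (@card_toggle_split (fun S => i \in S) k) ?mulnA //.
by move=> S; rewrite mem_toggle (negbTE nik).
Qed.

Lemma card_mem_notin i j : i != j ->
  4 * #|[set S : {set T} | (j \in S) && (i \notin S)]| = 2 ^ #|T|.
Proof.
rewrite eq_sym => nji; rewrite -(card_mem2 nji) -(@card_toggle_mem (fun S => j \in S) i) //.
by move=> S; rewrite mem_toggle (negbTE nji).
Qed.

Lemma card_hop_pairs i j k l :
  4 * #|[set S | [&& hoppable i j S, hoppable k l S & hop i j S == hop k l S]]|
  = 2 ^ #|T| * (((i == k) && (j == l)) + ((i == j) && (k == l))).
Proof.
rewrite (eq_card (B := [set S | [&& hoppable i j S, hoppable k l S &
   ((i == k) && (j == l)) || ((i == j) && (k == l))]])) => [|S]; last first.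
  rewrite !inE; case hij: (hoppable i j S); case hkl: (hoppable k l S) => //=.
  exact: eq_hop.
have [/andP[/eqP<- /eqP<-]|nb1] := boolP ((i == k) && (j == l)); rewrite /= ?andbb.
  have [<-|nij] := eqVneq i j.
    rewrite (eq_card (B := [set S : {set T} | i \in S])) => [|S].
      by rewrite -(card_mem i); lia.
    by rewrite !inE /hoppable setD11 andbT; case: (i \in S).
  rewrite (eq_card (B := [set S : {set T} | (j \in S) && (i \notin S)])) => [|S].
    by rewrite card_mem_notin // muln1.
  by rewrite !inE /hoppable !inE nij andbT andbb.
have [/andP[/eqP eij /eqP ekl]|nb2] := boolP ((i == j) && (k == l)); last first.
  by rewrite (eq_card (B := set0 : {set {set T}})) ?cards0 ?muln0 // => S; rewrite !inE !andbF.
subst j l; rewrite andbb in nb1.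
rewrite (eq_card (B := [set S : {set T} | (i \in S) && (k \in S)])) => [|S].
  by rewrite card_mem2 // muln1.
by rewrite !inE /hoppable !setD11 !andbT.
Qed.

End SubsetCounting.

Local Open Scope ring_scope.

Lemma sumr_indicator (R : pzSemiRingType) (T : finType) (P : pred T) :
  \sum_x (P x)%:R = #|[set x | P x]|%:R :> R.
Proof.
rewrite -sum1_card natr_sum [RHS]big_mkcond; apply: eq_bigr => x _.
by rewrite inE; case: (P x).
Qed.

Section Adjoint.
Variable C : numClosedFieldType.

Lemma adjmM m n p (A : 'M[C]_(m, n)) (B : 'M[C]_(n, p)) :
  adjm (A *m B) = adjm B *m adjm A.
Proof.
apply/matrixP => i j; rewrite !mxE rmorph_sum; apply: eq_bigr => k _.
by rewrite !mxE rmorphM mulrC.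
Qed.

Lemma adjmK m n (A : 'M[C]_(m, n)) : adjm (adjm A) = A.
Proof. by apply/matrixP => i j; rewrite !mxE conjCK. Qed.

Lemma adjm1 n : adjm (1%:M : 'M[C]_n) = 1%:M.
Proof. by apply/matrixP => i j; rewrite !mxE eq_sym; case: (i == j); rewrite ?rmorph1 ?rmorph0. Qed.

Lemma mxtrace_adjm n (A : 'M[C]_n) : \tr (adjm A) = (\tr A)^*.
Proof. by rewrite rmorph_sum; apply: eq_bigr => i _; rewrite mxE. Qed.

End Adjoint.

Section HilbertSchmidt.
Variables (C : numClosedFieldType) (n : nat).
Local Notation op := 'M[C]_(fdim n).

Fact hs_is_linear (X : op) : @GRing.linear_for C op C *%R (hs X).
Proof. by move=> a Y Z; rewrite /hs mulmxDr -scalemxAr mxtraceD mxtraceZ. Qed.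

HB.instance Definition _ (X : op) :=
  GRing.isLinear.Build C op C *%R (hs X : op -> C) (hs_is_linear X).

Lemma hsC (X Y : op) : hs Y X = (hs X Y)^*.
Proof. by rewrite /hs -mxtrace_adjm adjmM adjmK. Qed.

Lemma hs1l (X : op) : hs 1%:M X = \tr X.
Proof. by rewrite /hs adjm1 mul1mx. Qed.

Lemma hs1r (X : op) : hs X 1%:M = (\tr X)^*.
Proof. by rewrite hsC hs1l. Qed.

Lemma hsE (X Y : op) : hs X Y = \sum_r \sum_s (X s r)^* * Y s r.
Proof. by apply: eq_bigr => r _; rewrite mxE; apply: eq_bigr => s _; rewrite mxE. Qed.

End HilbertSchmidt.

Section Fock.
Variables (C : numClosedFieldType) (n : nat).
Local Notation op := 'M[C]_(fdim n).
Local Notation lbl := (@lbl n).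
Local Notation E i j := (cre C i *m ann C j).
Local Notation P2 := ((2 ^ n)%:R : C).
Implicit Types (i j k l : 'I_n) (S : {set 'I_n}).

Lemma sum_lbl (F : {set 'I_n} -> C) : \sum_(r < fdim n) F (lbl r) = \sum_S F S.
Proof. by rewrite /lbl (big_enum_val (A := {set 'I_n})). Qed.

Lemma lbl_inj : injective lbl.
Proof. exact: enum_val_inj. Qed.

Lemma lbl_rank S : lbl (enum_rank S) = S.
Proof. exact: enum_rankK. Qed.

Definition cre_sign i S : C := (-1) ^+ #|[set j in S | (j < i)%N]|.

Lemma conj_cre_sign i S : (cre_sign i S)^* = cre_sign i S.
Proof. by rewrite /cre_sign rmorphXn rmorphN1. Qed.

Lemma cre_sign_sqr i S : cre_sign i S * cre_sign i S = 1.
Proof. exact: sqrr_sign. Qed.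

Definition hop_sign i j S := cre_sign i (S :\ j) * cre_sign j (S :\ j).

Lemma conj_hop_sign i j S : (hop_sign i j S)^* = hop_sign i j S.
Proof. by rewrite /hop_sign rmorphM /= !conj_cre_sign. Qed.

Lemma hop_sign_diag i S : hop_sign i i S = 1.
Proof. exact: cre_sign_sqr. Qed.

Definition shift_mx (P : pred {set 'I_n}) (f : {set 'I_n} -> {set 'I_n})
  (w : {set 'I_n} -> C) : op :=
  \matrix_(r, s) if P (lbl s) && (lbl r == f (lbl s)) then w (lbl s) else 0.

Lemma hs_shift_mx P f w Q g v :
  hs (shift_mx P f w) (shift_mx Q g v) =
  \sum_S (if [&& P S, Q S & f S == g S] then (w S)^* * v S else 0).
Proof.
rewrite hsE -sum_lbl; apply: eq_bigr => r _.
rewrite (bigD1 (enum_rank (g (lbl r)))) //= big1 ?addr0 => [|s hs].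
  rewrite !mxE lbl_rank eqxx andbT eq_sym.
  by case: (P _) (Q _) (f _ == g _) => [] [] []; rewrite ?rmorph0 ?mul0r ?mulr0.
have -> : shift_mx Q g v s r = 0.
  rewrite mxE; case: ifP => // /andP[_ /eqP gr].
  by case/eqP: hs; apply: lbl_inj; rewrite lbl_rank.
by rewrite mulr0.
Qed.

Lemma mxtrace_shift_mx P f w :
  \tr (shift_mx P f w) = \sum_S (if P S && (f S == S) then w S else 0).
Proof. by rewrite -sum_lbl; apply: eq_bigr => r _; rewrite mxE eq_sym. Qed.

Lemma creE i : cre C i = shift_mx (fun S => i \notin S) (fun S => i |: S) (cre_sign i).
Proof. by apply/matrixP => r s; rewrite !mxE. Qed.

Lemma annE i r s : ann C i r s =
  if (i \notin lbl r) && (lbl s == i |: lbl r) then cre_sign i (lbl r) else 0.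
Proof. by rewrite !mxE; case: ifP => _; rewrite ?conj_cre_sign ?rmorph0. Qed.

Lemma cre_ann_shift i j : E i j = shift_mx (hoppable i j) (hop i j) (hop_sign i j).
Proof.
apply/matrixP => r s; rewrite !mxE (bigD1 (enum_rank (lbl s :\ j))) //=.
rewrite big1 ?addr0 => [|t ht]; last first.
  rewrite annE; case: ifP => [/andP[jt /eqP st]|]; last by rewrite mulr0.
  by case/eqP: ht; apply: lbl_inj; rewrite lbl_rank st setU1K.
rewrite creE annE !mxE lbl_rank setD11 /hoppable /hop /hop_sign.
have [js|jNs] := boolP (j \in lbl s); last first.
  have -> : (lbl s == j |: lbl s :\ j) = false.
    by apply/negbTE; apply: contraNneq jNs => ->; rewrite setU11.
  by rewrite mulr0.
by rewrite setD1K // eqxx /=; case: ifP; rewrite ?mul0r.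
Qed.

Lemma hs_cre_ann i j k l :
  4 * hs (E i j) (E k l) = P2 * (((i == k) && (j == l)) + ((i == j) && (k == l)))%:R.
Proof.
rewrite !cre_ann_shift hs_shift_mx.
rewrite (eq_bigr (fun S => [&& hoppable i j S, hoppable k l S & hop i j S == hop k l S]%:R)).
  by rewrite sumr_indicator -!natrM card_hop_pairs card_ord.
move=> S _; case: ifP => // /and3P[hij hkl]; rewrite conj_hop_sign eq_hop //.
case/orP=> /andP[/eqP <- /eqP <-]; last by rewrite !hop_sign_diag mulr1.
by rewrite /hop_sign mulrACA !cre_sign_sqr mulr1.
Qed.

Lemma mxtrace_cre_ann i j : 2 * \tr (E i j) = P2 * (i == j)%:R.
Proof.
rewrite cre_ann_shift mxtrace_shift_mx.
have [<-|nij] := eqVneq i j; last first.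
  rewrite big1 ?mulr0 // => S _; case: ifP => // /andP[/andP[_ iS] /eqP hopS].
  by move: iS; rewrite !inE nij /= -hopS /hop setU11.
rewrite (eq_bigr (fun S => (i \in S)%:R)) => [|S _]; last first.
  by rewrite hoppable_diag hop_sign_diag; case iS: (i \in S); rewrite //= hop_diag ?eqxx.
by rewrite (@sumr_indicator _ _ (fun S : {set 'I_n} => i \in S)) -natrM (card_mem i) card_ord mulr1.
Qed.

Lemma Nhat_dGamma1 : Nhat C n = dGamma 1%:M.
Proof.
apply: eq_bigr => i _; rewrite (bigD1 i) //= big1 ?addr0 ?mxE ?eqxx ?scale1r //.
by move=> j ji; rewrite mxE eq_sym (negbTE ji) scale0r.
Qed.

Lemma NhatE r s : Nhat C n r s = if r == s then #|lbl s|%:R else 0.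
Proof.
rewrite summxE; under eq_bigr => i _ do rewrite cre_ann_shift mxE hoppable_diag hop_sign_diag.
have [<-|nrs] := eqVneq r s; last first.
  apply: big1 => i _; case: ifP => // /andP[iS /eqP rS].
  by case/eqP: nrs; apply: lbl_inj; rewrite rS hop_diag.
rewrite -sum1_card natr_sum [RHS]big_mkcond; apply: eq_bigr => i _.
by case iS: (i \in lbl r); rewrite //= hop_diag ?eqxx.
Qed.

Definition homogeneous (d : int) (X : op) :=
  forall r s, X r s != 0 -> #|lbl r|%:Z = #|lbl s|%:Z + d.

Lemma homogeneous_cre i : homogeneous 1 (cre C i).
Proof.
move=> r s; rewrite creE mxE; case: ifP => [/andP[iS /eqP ->] _|]; last by rewrite eqxx.
by rewrite cardsU1 iS; lia.
Qed.

Lemma homogeneous_ann i : homogeneous (-1) (ann C i).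
Proof.
move=> r s; rewrite annE; case: ifP => [/andP[iS /eqP ->] _|]; last by rewrite eqxx.
by rewrite cardsU1 iS; lia.
Qed.

Lemma homogeneous_mul d e (X Y : op) :
  homogeneous d X -> homogeneous e Y -> homogeneous (d + e) (X *m Y).
Proof.
move=> hX hY r s; rewrite mxE => nz.
have [t|XY0] := pickP (fun t => X r t * Y t s != 0); last first.
  by move: nz; rewrite big1 ?eqxx // => t _; apply/eqP/negbFE; rewrite XY0.
by rewrite mulf_eq0 negb_or => /andP[/hX -> /hY ->]; rewrite addrAC -addrA.
Qed.

Lemma homogeneous_add d (X Y : op) :
  homogeneous d X -> homogeneous d Y -> homogeneous d (X + Y).
Proof.
move=> hX hY r s; rewrite mxE; have [X0|/hX -> //] := eqVneq (X r s) 0.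
by rewrite X0 add0r; exact: hY.
Qed.

Lemma homogeneous_scale d a (X : op) : homogeneous d X -> homogeneous d (a *: X).
Proof. by move=> hX r s; rewrite mxE mulf_eq0 negb_or => /andP[_]; exact: hX. Qed.

Lemma homogeneous_sub d (X Y : op) :
  homogeneous d X -> homogeneous d Y -> homogeneous d (X - Y).
Proof.
move=> hX hY; apply: homogeneous_add hX _; rewrite -scaleN1r.
exact: homogeneous_scale.
Qed.

Lemma homogeneous_sum d I (r : seq I) (F : I -> op) :
  (forall x, homogeneous d (F x)) -> homogeneous d (\sum_(x <- r) F x).
Proof.
move=> hF; apply: (big_ind (homogeneous d)) => //; last exact: homogeneous_add.
by move=> r' s'; rewrite mxE eqxx.
Qed.

Lemma homogeneous1 : homogeneous 0 (1%:M : op).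
Proof. by move=> r s; rewrite mxE addr0; have [->|] := eqVneq r s; rewrite ?eqxx. Qed.

Lemma homogeneous_dGamma (h : 'M[C]_n) : homogeneous 0 (dGamma h).
Proof.
apply: homogeneous_sum => i; apply: homogeneous_sum => j; apply: homogeneous_scale.
by have := homogeneous_mul (@homogeneous_cre i) (@homogeneous_ann j); rewrite addrN.
Qed.

Lemma homogeneous_commNhat (X : op) : X *m Nhat C n = Nhat C n *m X -> homogeneous 0 X.
Proof.
move=> XN r s nz; have /matrixP/(_ r s)/eqP := XN; rewrite !mxE.
rewrite (bigD1 s) //= big1 ?addr0 => [|t ts]; last by rewrite NhatE (negbTE ts) mulr0.
rewrite [in X in _ == X](bigD1 r) //= big1 ?addr0 => [|t tr]; last first.
  by rewrite NhatE eq_sym (negbTE tr) mul0r.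
rewrite !NhatE !eqxx mulrC -subr_eq0 -mulrBl mulf_eq0 (negbTE nz) orbF subr_eq0.
by rewrite eqr_nat => /eqP ->.
Qed.

Lemma hs_homogeneous d e (X Y : op) :
  homogeneous d X -> homogeneous e Y -> d != e -> hs X Y = 0.
Proof.
move=> hX hY de; rewrite hsE big1 // => r _; rewrite big1 // => s _.
have [->|/hX Xsr] := eqVneq (X s r) 0; first by rewrite rmorph0 mul0r.
have [->|/hY Ysr] := eqVneq (Y s r) 0; first by rewrite mulr0.
by move: de; rewrite -(addrI _ (etrans (esym Xsr) Ysr)) eqxx.
Qed.

Fact dGamma_is_linear : @GRing.linear_for C 'M[C]_n op *:%R (@dGamma C n).
Proof.
move=> a h h'; rewrite scaler_sumr -big_split; apply: eq_bigr => i _.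
rewrite scaler_sumr -big_split; apply: eq_bigr => j _.
by rewrite !mxE scalerDl scalerA.
Qed.

HB.instance Definition _ :=
  GRing.isLinear.Build C 'M[C]_n op *:%R (@dGamma C n : 'M[C]_n -> op) dGamma_is_linear.

Lemma hs_dGamma (X : op) (h : 'M[C]_n) :
  hs X (dGamma h) = \sum_k \sum_l h k l * hs X (E k l).
Proof.
rewrite linear_sum; apply: eq_bigr => k _.
by rewrite linear_sum; apply: eq_bigr => l _; rewrite linearZ.
Qed.

Lemma hs_cre_ann_dGamma i j (h : 'M[C]_n) :
  4 * hs (E i j) (dGamma h) = P2 * (h i j + (i == j)%:R * \tr h).
Proof.
have -> : 4 * hs (E i j) (dGamma h) = P2 * \sum_k \sum_l
    (h k l * ((i == k) && (j == l))%:R + h k l * ((i == j) && (k == l))%:R).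
  rewrite hs_dGamma !mulr_sumr; apply: eq_bigr => k _; rewrite !mulr_sumr.
  by apply: eq_bigr => l _; rewrite mulrCA hs_cre_ann natrD; ring.
under eq_bigr => k _ do rewrite big_split /=.
rewrite big_split /=; congr (_ * (_ + _)).
  rewrite (bigD1 i) //= (bigD1 j) //= !eqxx mulr1 !big1 ?addr0 // => [k ki|l lj].
    by rewrite big1 // => l _; rewrite eq_sym (negbTE ki) mulr0.
  by rewrite andbC eq_sym (negbTE lj) mulr0.
rewrite mulr_sumr; apply: eq_bigr => k _; rewrite (bigD1 k) //= big1 ?addr0.
  by rewrite eqxx andbT mulrC.
by move=> l lk; rewrite [k == l]eq_sym (negbTE lk) andbF mulr0.
Qed.

Lemma hs1_dGamma (h : 'M[C]_n) : hs 1%:M (dGamma h) = P2 * \tr h / 2.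
Proof.
have trE k l : \tr (E k l) = P2 * (k == l)%:R / 2 by rewrite -mxtrace_cre_ann; field.
rewrite hs_dGamma [\tr h]/mxtrace mulr_sumr mulr_suml; apply: eq_bigr => k _.
rewrite (bigD1 k) //= big1 ?addr0 => [|l lk]; rewrite hs1l trE.
  by rewrite eqxx /=; ring.
by rewrite [k == l]eq_sym (negbTE lk) /= mulr0 mul0r mulr0.
Qed.

Lemma pow2n_neq0 : P2 != 0.
Proof. by rewrite pnatr_eq0 expn_eq0. Qed.

Definition pi1 (g : 'M[C]_n) : op :=
  P2^-1 *: ((n%:R + 1 - 2 * \tr g) *: 1%:M - 2 *: Nhat C n + 4 *: dGamma g).

Lemma pi1E (g : 'M[C]_n) :
  pi1 g = (P2^-1 * (n%:R + 1 - 2 * \tr g)) *: 1%:M + dGamma (P2^-1 *: (4 *: g - 2 *: 1%:M)).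
Proof.
rewrite [in RHS]linearZ [in RHS]linearB /= !linearZ /= /pi1 Nhat_dGamma1.
by rewrite scalerN -addrA [4 *: _ + _]addrC scalerDr scalerA.
Qed.

Lemma pi1_in_O1 (g : 'M[C]_n) : inO1 (pi1 g).
Proof.
exists (P2^-1 * (n%:R + 1 - 2 * \tr g)), (P2^-1 *: (4 *: g - 2 *: 1%:M)), 0, 0.
have sum0 (F : 'I_n -> 'I_n -> op) : \sum_i \sum_j (0 : 'M[C]_n) i j *: F i j = 0.
  by apply: big1 => i _; apply: big1 => j _; rewrite mxE scale0r.
by rewrite !sum0 !addr0 pi1E.
Qed.

Lemma homogeneous_pi1 (g : 'M[C]_n) : homogeneous 0 (pi1 g).
Proof.
rewrite pi1E; apply: homogeneous_add; last exact: homogeneous_dGamma.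
exact: homogeneous_scale homogeneous1.
Qed.

Lemma hs_pi1 (X : op) (g : 'M[C]_n) : hs X (pi1 g) = P2^-1 *
  ((n%:R + 1 - 2 * \tr g) * hs X 1%:M - 2 * hs X (dGamma 1%:M) + 4 * hs X (dGamma g)).
Proof. by rewrite linearZ linearD linearB !linearZ Nhat_dGamma1. Qed.

Lemma hs1_pi1 (g : 'M[C]_n) : hs 1%:M (pi1 g) = 1.
Proof.
rewrite hs_pi1 !hs1_dGamma hs1l !mxtrace1 /fdim card_sets card_ord.
by field; exact: pow2n_neq0.
Qed.

Lemma hs_cre_ann_pi1 i j (g : 'M[C]_n) : hs (E i j) (pi1 g) = g i j.
Proof.
have hs_dGamma_quarter h : hs (E i j) (dGamma h) = P2 * (h i j + (i == j)%:R * \tr h) / 4.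
  by rewrite -hs_cre_ann_dGamma; field.
have hs_cre_ann1 : hs (E i j) 1%:M = P2 * (i == j)%:R / 2.
  rewrite hs1r; have := congr1 Num.conj (mxtrace_cre_ann i j).
  by rewrite !rmorphM /= !rmorph_nat => <-; field.
rewrite hs_pi1 hs_cre_ann1 !hs_dGamma_quarter mxtrace1 mxE.
by field; exact: pow2n_neq0.
Qed.

Lemma hs_cre_ann_gam i j (rho : op) : hs (E i j) rho = gam rho i j.
Proof. by rewrite /hs adjmM adjmK mxE mxtrace_mulC. Qed.

Lemma orthogonal_O1 (Z : op) : homogeneous 0 Z ->
  hs 1%:M Z = 0 -> (forall i j, hs (E i j) Z = 0) -> forall X, inO1 X -> hs X Z = 0.
Proof.
move=> hZ h1 hE X [a [B [D [F ->]]]].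
have hsZ0 Y : hs Y Z = 0 -> hs Z Y = 0 by move=> YZ; rewrite hsC YZ rmorph0.
have sum0 (G : 'M[C]_n) (Y : 'I_n -> 'I_n -> op) : (forall i j, hs (Y i j) Z = 0) ->
    hs Z (\sum_i \sum_j G i j *: Y i j) = 0.
  move=> hY; rewrite linear_sum big1 // => i _; rewrite linear_sum big1 // => j _.
  by rewrite linearZ /= hsZ0 ?mulr0.
rewrite hsC !linearD linearZ /= hsZ0 // !sum0 ?mulr0 ?addr0 ?rmorph0 //.
- move=> i j.
  by apply: hs_homogeneous (homogeneous_mul (@homogeneous_ann i) (@homogeneous_ann j)) hZ _.
- move=> i j.
  by apply: hs_homogeneous (homogeneous_mul (@homogeneous_cre i) (@homogeneous_cre j)) hZ _.
Qed.

End Fock.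

Theorem corollary1p2 (C : numClosedFieldType) (n : nat) (rho : op C n) :
  density rho ->
  rho *m Nhat C n = Nhat C n *m rho ->
  is_orth_proj (@inO1 C n) rho
    ((2 ^ n)%:R^-1 *:
       ((n%:R + 1 - 2 * \tr (gam rho)) *: 1%:M
        - 2 *: Nhat C n
        + 4 *: dGamma (gam rho))).
Proof.
move=> [_ tr_rho] rhoN; change (is_orth_proj (@inO1 C n) rho (pi1 (gam rho))).
split; first exact: pi1_in_O1.
apply: orthogonal_O1.
- by apply: homogeneous_sub; [exact: homogeneous_commNhat | exact: homogeneous_pi1].
- by rewrite linearB /= hs1l tr_rho hs1_pi1 subrr.
- by move=> i j; rewrite linearB /= hs_cre_ann_gam hs_cre_ann_pi1 subrr.
Qed.
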